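(* Let $R$ be a complete discrete valuation ring of characteristic $p>0$ with uniformizer $\pi$, field of fractions $K$, and normalized valuation $v_K$. Let $H$ be a primitively generated $K$-Hopf algebra of rank $p^2$, $t_1,t_2$ a $K$-basis of $\mathrm{Prim}(H)$ with associated matrix $B$. Let \[\Theta=\begin{pmatrix}\pi^i&0\\ \theta&\pi^j\end{pmatrix},\qquad \Theta'=\begin{pmatrix}\pi^{i'}&0\\ \theta'&\pi^{j'}\end{pmatrix},\] with $i,j,i',j'\in\mathbb{Z}$, $\theta,\theta'\in K$, $v_K(\theta)\le j$, $v_K(\theta')\le j'$, and suppose $\Theta^{-1}B\Theta^{(p)}$ and $\Theta'^{-1}B\Theta'^{(p)}$ both lie in $M_2(R)$. Then $\Theta$ and $\Theta'$ give the same Hopf order, i.e. $R[\pi^it_1+\theta t_2,\ \pi^jt_2]=R[\pi^{i'}t_1+\theta' t_2,\ \pi^{j'}t_2]$ as subalgebras of $H$, if and only if $i=i'$, $j=j'$, and $v_K(\theta-\theta')\ge j$.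
   Context: $\Theta^{(p)}$ denotes the matrix obtained by raising each entry of $\Theta$ to the $p$-th power. $t$ is primitive if $\Delta(t)=t\otimes1+1\otimes t$; $\mathrm{Prim}(H)$ is the module of primitives; $H$ is primitively generated if generated as an algebra by its primitives. The associated matrix $B=(b_{j,i})$ is defined by $t_i^p=\sum_j b_{j,i}t_j$. When $\Theta=(\theta_{j,i})\in\mathrm{GL}_2(K)$ satisfies $\Theta^{-1}B\Theta^{(p)}\in M_2(R)$, the Hopf order given by $\Theta$ is the $R$-subalgebra $R[\theta_{1,1}t_1+\theta_{2,1}t_2,\ \theta_{1,2}t_1+\theta_{2,2}t_2]$ of $H$, which is an $R$-Hopf order in $H$ (a finitely generated projective $R$-submodule that is an $R$-Hopf algebra under the inherited operations and spans $H$ over $K$). *)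

From HB Require Import structures.
From mathcomp Require Import all_boot all_order all_algebra all_field.
Set Implicit Arguments. Unset Strict Implicit. Unset Printing Implicit Defensive.
Import Order.TTheory GRing.Theory Num.Theory.
Local Open Scope ring_scope.

(* Discrete valuations.  v is only meaningful on nonzero elements;     *)
(* v 0 = +oo is encoded by the predicates vge / vle below.            *)
Section Valuation.
Variable K : fieldType.

Definition vge (v : K -> int) (x : K) (n : int) : Prop := x = 0 \/ n <= v x.
Definition vle (v : K -> int) (x : K) (n : int) : Prop := x <> 0 /\ v x <= n.

Record complete_dvr (v : K -> int) (pi : K) : Prop := {
  dvr_mul : forall x y, x != 0 -> y != 0 -> v (x * y) = v x + v y;
  dvr_add : forall x y, x != 0 -> y != 0 -> x + y != 0 ->
              Num.min (v x) (v y) <= v (x + y);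
  dvr_pi_neq0 : pi != 0;
  dvr_pi : v pi = 1;
  dvr_complete : forall u : nat -> K,
    (forall N : int, exists M : nat, forall m n : nat,
        (M <= m)%N -> (M <= n)%N -> vge v (u m - u n) N) ->
    exists l : K, forall N : int, exists M : nat, forall n : nat,
        (M <= n)%N -> vge v (u n - l) N
}.

Definition inR (v : K -> int) (x : K) : Prop := vge v x 0.

End Valuation.

(* An element of H (x) H is represented by a finite list of pure       *)
(* tensors sum_k a_k (x) b_k; two such lists represent the same tensor  *)
(* iff they agree under every pair of linear functionals (H is finite  *)
(* dimensional, so pairs of functionals separate H (x) H).             *)
Section Hopf.
Variables (K : fieldType) (H : falgType K).

Definition tensor := seq (H * H).

Definition tpair (f g : 'Hom(H, K^o)) (s : tensor) : K :=
  \sum_(u <- s) (f u.1 : K) * (g u.2 : K).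

Definition teq (s t : tensor) : Prop :=
  forall f g : 'Hom(H, K^o), tpair f g s = tpair f g t.

Definition tmul (s t : tensor) : tensor :=
  [seq (u.1 * w.1, u.2 * w.2) | u <- s, w <- t].

Definition tscale (a : K) (s : tensor) : tensor := [seq (a *: u.1, u.2) | u <- s].

Record is_hopf (Delta : H -> tensor) (eps : H -> K) (S : H -> H) : Prop := {
  hopf_Delta_lin : forall a x y, teq (Delta (a *: x + y)) (tscale a (Delta x) ++ Delta y);
  hopf_Delta_mul : forall x y, teq (Delta (x * y)) (tmul (Delta x) (Delta y));
  hopf_Delta_1 : teq (Delta 1) [:: (1, 1)];
  hopf_eps_lin : forall a x y, eps (a *: x + y) = a * eps x + eps y;
  hopf_eps_mul : forall x y, eps (x * y) = eps x * eps y;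
  hopf_eps_1 : eps 1 = 1;
  hopf_S_lin : forall a x y, S (a *: x + y) = a *: S x + S y;
  hopf_coassoc : forall x (f g h : 'Hom(H, K^o)),
    \sum_(u <- Delta x) tpair f g (Delta u.1) * (h u.2 : K) =
    \sum_(u <- Delta x) (f u.1 : K) * tpair g h (Delta u.2);
  hopf_counit_l : forall x, \sum_(u <- Delta x) eps u.1 *: u.2 = x;
  hopf_counit_r : forall x, \sum_(u <- Delta x) eps u.2 *: u.1 = x;
  hopf_antipode_l : forall x, \sum_(u <- Delta x) S u.1 * u.2 = eps x *: 1;
  hopf_antipode_r : forall x, \sum_(u <- Delta x) u.1 * S u.2 = eps x *: 1
}.

Definition primitive (Delta : H -> tensor) (t : H) : Prop :=
  teq (Delta t) [:: (t, 1); (1, t)].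

Definition primitively_generated (Delta : H -> tensor) : Prop :=
  exists s : seq H, (forall t, t \in s -> primitive Delta t) /\
                    agenv (<<s>>%VS) = fullv.

Inductive Rsubalg (Rp : K -> Prop) (x y : H) : H -> Prop :=
| Rsubalg_x : Rsubalg Rp x y x
| Rsubalg_y : Rsubalg Rp x y y
| Rsubalg_scal r : Rp r -> Rsubalg Rp x y (r%:A)
| Rsubalg_add a b : Rsubalg Rp x y a -> Rsubalg Rp x y b -> Rsubalg Rp x y (a + b)
| Rsubalg_mul a b : Rsubalg Rp x y a -> Rsubalg Rp x y b -> Rsubalg Rp x y (a * b).

End Hopf.

Definition Theta_mx (K : fieldType) (pi : K) (i j : int) (th : K) : 'M[K]_2 :=
  \matrix_(a < 2, b < 2)
    if (a == 0 :> nat) then (if (b == 0 :> nat) then pi ^ i else 0)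
    else (if (b == 0 :> nat) then th else pi ^ j).

Definition integral_cond (K : fieldType) (v : K -> int) (p : nat)
    (B Th : 'M[K]_2) : Prop :=
  forall a b, inR v ((invmx Th *m B *m map_mx (fun x => x ^+ p) Th) a b).

(* Put x = pi^i t1 + th t2 and y = pi^j t2.  Since Frobenius is additive on
   the commutative algebra H, x^p and y^p are combinations of x and y with
   coefficients the entries of Theta^-1 B Theta^(p), so integrality says they
   lie in Rx + Ry.  Hence the R-algebra generated by x and y is the R-span of
   the monomials x^a y^b (a, b < p); these are a K-basis of H, because H has
   dimension p^2 and is generated by primitive elements, all of which lie in
   Kx + Ky.  Thus a x + b y belongs to the order only if a, b are in R.
   Writing the generators of one order in the coordinates of the other then
   forces i = i', j = j' and v(th - th') >= j, and conversely this last
   condition lets each pair of generators be rewritten through the other. *)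

From HB Require Import structures.
From mathcomp Require Import all_boot all_order all_algebra all_field.
From mathcomp Require Import zify.
Set Implicit Arguments. Unset Strict Implicit. Unset Printing Implicit Defensive.
Import Order.TTheory GRing.Theory Num.Theory.
Local Open Scope ring_scope.

Section ValuationRing.
Variables (K : fieldType) (v : K -> int) (pi : K).
Hypothesis hv : complete_dvr v pi.

Lemma dvr_v1 : v 1 = 0.
Proof.
have := dvr_mul hv (oner_neq0 K) (oner_neq0 K); rewrite mulr1 => h.
by apply: (addrI (v 1)); rewrite addr0 -h.
Qed.

Lemma dvr_vN1 : v (-1) = 0.
Proof.
have n1 : (-1 : K) != 0 by rewrite oppr_eq0 oner_neq0.
by have := dvr_mul hv n1 n1; rewrite mulrNN mulr1 dvr_v1 => h; lia.
Qed.

Lemma dvr_vV x : x != 0 -> v x^-1 = - v x.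
Proof.
move=> x0; have := dvr_mul hv x0 (invr_neq0 x0).
by rewrite mulfV // dvr_v1 => h; lia.
Qed.

Lemma piz_neq0 (n : int) : pi ^ n != 0.
Proof. by rewrite expfz_neq0 // (dvr_pi_neq0 hv). Qed.

Lemma dvr_v_piz (n : int) : v (pi ^ n) = n.
Proof.
have v_piX (m : nat) : v (pi ^+ m) = m.
  elim: m => [|m IHm]; first by rewrite expr0 dvr_v1.
  rewrite exprS (dvr_mul hv) ?expf_neq0 ?(dvr_pi_neq0 hv) // IHm (dvr_pi hv); lia.
case: n => m; first exact: v_piX.
by rewrite /exprz dvr_vV ?expf_neq0 ?(dvr_pi_neq0 hv) // v_piX NegzE.
Qed.

Lemma inR0 : inR v 0. Proof. by left. Qed.

Lemma inR1 : inR v 1. Proof. by right; rewrite dvr_v1. Qed.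

Lemma inRD x y : inR v x -> inR v y -> inR v (x + y).
Proof.
case=> [->|vx]; first by rewrite add0r.
case=> [->|vy]; first by rewrite addr0; right.
have [->|x0] := eqVneq x 0; first by rewrite add0r; right.
have [->|y0] := eqVneq y 0; first by rewrite addr0; right.
have [|xy0] := eqVneq (x + y) 0; first by left.
by right; apply: le_trans (dvr_add hv x0 y0 xy0); rewrite le_min vx vy.
Qed.

Lemma inRM x y : inR v x -> inR v y -> inR v (x * y).
Proof.
case=> [->|vx]; first by rewrite mul0r; left.
case=> [->|vy]; first by rewrite mulr0; left.
have [->|x0] := eqVneq x 0; first by rewrite mul0r; left.
have [->|y0] := eqVneq y 0; first by rewrite mulr0; left.
by right; rewrite (dvr_mul hv) //; lia.
Qed.

Lemma inRN x : inR v x -> inR v (- x).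
Proof. by rewrite -mulN1r; apply: inRM; right; rewrite dvr_vN1. Qed.

Lemma inR_divpiz x (n : int) : inR v (x / pi ^ n) <-> vge v x n.
Proof.
have [->|x0] := eqVneq x 0; first by rewrite mul0r; split=> _; left.
have x_pin0 : x / pi ^ n != 0 by rewrite mulf_neq0 ?invr_neq0 ?piz_neq0.
rewrite /inR /vge (dvr_mul hv) ?invr_neq0 ?piz_neq0 // dvr_vV ?piz_neq0 // dvr_v_piz.
by split=> -[/eqP|]; rewrite ?(negPf x0) ?(negPf x_pin0) // => ?; right; lia.
Qed.

Lemma le_of_inR_divpiz (m n : int) : inR v (pi ^ m / pi ^ n) -> n <= m.
Proof. by move/inR_divpiz => [/eqP|]; rewrite ?(negPf (piz_neq0 _)) ?dvr_v_piz. Qed.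

End ValuationRing.

Section Monomials.
Variables (K : fieldType) (H : falgType K) (p : nat) (u1 u2 : H).

Definition monomial (k : nat) : H := u1 ^+ (k %/ p) * u2 ^+ (k %% p).

Definition monomials := [tuple monomial i | i < p * p].

Definition Rspan (Rp : K -> Prop) (z : H) : Prop :=
  exists g : 'I_(p * p) -> K, (forall k, Rp (g k)) /\ z = \sum_k g k *: monomial k.

Lemma nth_monomials (k : 'I_(p * p)) : monomials`_k = monomial k.
Proof. by rewrite -tnth_nth tnth_mktuple. Qed.

Hypothesis p_gt0 : (0 < p)%N.

Lemma monomialE a b : (b < p)%N -> monomial (a * p + b) = u1 ^+ a * u2 ^+ b.
Proof. by move=> lt_bp; rewrite /monomial divnMDl // modnMDl divn_small ?modn_small ?addn0. Qed.

Lemma monomial_exps_lt (k : 'I_(p * p)) : (k %/ p < p)%N /\ (k %% p < p)%N.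
Proof. by rewrite ltn_divLR ?ltn_pmod. Qed.

End Monomials.

Section RspanAlgebra.
Variables (K : fieldType) (H : falgType K).
Hypothesis Hcomm : forall x y : H, x * y = y * x.
Variable p : nat.
Hypothesis p_gt1 : (1 < p)%N.
Variable Rp : K -> Prop.
Hypotheses (Rp0 : Rp 0) (Rp1 : Rp 1)
  (RpD : forall a b, Rp a -> Rp b -> Rp (a + b))
  (RpM : forall a b, Rp a -> Rp b -> Rp (a * b)).
Variables (u1 u2 : H) (c d e f : K).
Hypotheses (Rc : Rp c) (Rd : Rp d) (Re : Rp e) (Rf : Rp f)
  (hu1 : u1 ^+ p = c *: u1 + d *: u2) (hu2 : u2 ^+ p = e *: u1 + f *: u2).

Local Notation Rspan := (Rspan p u1 u2 Rp).

Let p_gt0 : (0 < p)%N := ltnW p_gt1.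

Lemma Rspan0 : Rspan 0.
Proof. by exists (fun=> 0); split=> //; rewrite big1 // => k _; rewrite scale0r. Qed.

Lemma RspanD z w : Rspan z -> Rspan w -> Rspan (z + w).
Proof.
move=> [g [Rg ->]] [h [Rh ->]]; exists (fun k => g k + h k); split=> [k|]; first exact: RpD.
by rewrite -big_split; apply: eq_bigr => k _; rewrite scalerDl.
Qed.

Lemma RspanZ r z : Rp r -> Rspan z -> Rspan (r *: z).
Proof.
move=> Rr [g [Rg ->]]; exists (fun k => r * g k); split=> [k|]; first exact: RpM.
by rewrite scaler_sumr; apply: eq_bigr => k _; rewrite scalerA.
Qed.

Lemma Rspan_sum (I : finType) (F : I -> H) : (forall i, Rspan (F i)) -> Rspan (\sum_i F i).
Proof. by move=> RF; apply: big_ind => //; [exact: Rspan0 | exact: RspanD]. Qed.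

Lemma Rspan_u1Xu2X a b : (a < p)%N -> (b < p)%N -> Rspan (u1 ^+ a * u2 ^+ b).
Proof.
move=> lt_ap lt_bp; have lt_k : (a * p + b < p * p)%N by nia.
rewrite -(monomialE _ _ p_gt0) //; exists (fun k => (k == Ordinal lt_k)%:R).
split=> [k|]; first by case: (_ == _).
rewrite (bigD1 (Ordinal lt_k)) //= eqxx scale1r big1 ?addr0 // => k ne_k.
by rewrite (negPf ne_k) scale0r.
Qed.

Lemma Rspan1 : Rspan 1.
Proof. by have := Rspan_u1Xu2X p_gt0 p_gt0; rewrite !expr0 mulr1. Qed.

Lemma Rspan_u1 : Rspan u1.
Proof. by have := Rspan_u1Xu2X p_gt1 p_gt0; rewrite expr1 expr0 mulr1. Qed.

Lemma Rspan_u2 : Rspan u2.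
Proof. by have := Rspan_u1Xu2X p_gt0 p_gt1; rewrite expr1 expr0 mul1r. Qed.

Lemma Rspan_u1X a : (a <= p)%N -> Rspan (u1 ^+ a).
Proof.
rewrite leq_eqVlt => /predU1P[->|lt_ap].
  by rewrite hu1; apply: RspanD; apply: RspanZ => //; [exact: Rspan_u1 | exact: Rspan_u2].
by have := Rspan_u1Xu2X lt_ap p_gt0; rewrite expr0 mulr1.
Qed.

Lemma Rspan_mulu2 z : Rspan z -> Rspan (u2 * z).
Proof.
move=> [g [Rg ->]]; rewrite mulr_sumr; apply: Rspan_sum => k.
rewrite -scalerAr; apply: RspanZ => //; have [lt_a lt_b] := monomial_exps_lt p_gt0 k.
rewrite /monomial mulrA [u2 * _]Hcomm -mulrA -exprS.
move: lt_b; rewrite leq_eqVlt => /predU1P[->|]; last exact: Rspan_u1Xu2X.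
rewrite hu2 mulrDr -!scalerAr -exprSr; apply: RspanD; apply: RspanZ => //.
  exact: Rspan_u1X.
by have := Rspan_u1Xu2X lt_a p_gt1; rewrite expr1.
Qed.

Lemma Rspan_mulu1 z : Rspan z -> Rspan (u1 * z).
Proof.
move=> [g [Rg ->]]; rewrite mulr_sumr; apply: Rspan_sum => k.
rewrite -scalerAr; apply: RspanZ => //; have [lt_a lt_b] := monomial_exps_lt p_gt0 k.
rewrite /monomial mulrA -exprS.
move: lt_a; rewrite leq_eqVlt => /predU1P[->|lt_a1]; last exact: Rspan_u1Xu2X.
rewrite hu1 mulrDl -!scalerAl; apply: RspanD; apply: RspanZ => //.
  by have := Rspan_u1Xu2X p_gt1 lt_b; rewrite expr1.
by apply: Rspan_mulu2; have := Rspan_u1Xu2X p_gt0 lt_b; rewrite expr0 mul1r.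
Qed.

Lemma Rspan_mul z w : Rspan z -> Rspan w -> Rspan (z * w).
Proof.
have Rspan_mulX u (Rspan_mulu : forall x, Rspan x -> Rspan (u * x)) n x :
    Rspan x -> Rspan (u ^+ n * x).
  by move=> Rx; elim: n => [|n IHn]; rewrite ?expr0 ?mul1r // exprS -mulrA; apply: Rspan_mulu.
move=> [g [Rg ->]] Rw; rewrite mulr_suml; apply: Rspan_sum => k.
rewrite -scalerAl /monomial -mulrA; apply: RspanZ => //.
by apply/(Rspan_mulX _ Rspan_mulu1)/(Rspan_mulX _ Rspan_mulu2).
Qed.

Lemma Rsubalg_Rspan z : Rsubalg Rp u1 u2 z -> Rspan z.
Proof.
elim=> [| |r Rr|x y _ Rx _ Ry|x y _ Rx _ Ry].
- exact: Rspan_u1.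
- exact: Rspan_u2.
- by rewrite -[r%:A]mulr1 mulr_algl; apply: RspanZ => //; apply: Rspan1.
- exact: RspanD.
- exact: Rspan_mul.
Qed.

Lemma Rsubalg_coef z a b : free (monomials p u1 u2) ->
  Rsubalg Rp u1 u2 z -> z = a *: u1 + b *: u2 -> Rp a /\ Rp b.
Proof.
move=> freeX /Rsubalg_Rspan [g [Rg Ez]] Eab.
have lt_p : (p < p * p)%N by nia.
have lt_1 : (1 < p * p)%N by nia.
have X_u1 : (monomials p u1 u2)`_(Ordinal lt_p) = u1.
  rewrite nth_monomials; have := monomialE u1 u2 p_gt0 1 p_gt0.
  by rewrite mul1n addn0 expr1 expr0 mulr1.
have X_u2 : (monomials p u1 u2)`_(Ordinal lt_1) = u2.
  by rewrite nth_monomials; have := monomialE u1 u2 p_gt0 0 p_gt1; rewrite expr0 expr1 mul1r.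
have ne_1p : (Ordinal lt_1 == Ordinal lt_p) = false.
  by apply/negbTE; rewrite -val_eqE /= neq_ltn p_gt1.
have coord_z k : coord (monomials p u1 u2) k z = g k.
  rewrite Ez (eq_bigr (fun k => g k *: (monomials p u1 u2)`_k)) => [|i _].
    exact: coord_sum_free.
  by rewrite nth_monomials.
have coord_ab k : coord (monomials p u1 u2) k z =
    a * (Ordinal lt_p == k)%:R + b * (Ordinal lt_1 == k)%:R.
  have := coord_free (Ordinal lt_p) k freeX; have := coord_free (Ordinal lt_1) k freeX.
  by rewrite Eab linearD !linearZ /= X_u1 X_u2 => -> ->.
split.
  by have := coord_ab (Ordinal lt_p); rewrite coord_z eqxx ne_1p mulr1 mulr0 addr0 => <-.
by have := coord_ab (Ordinal lt_1); rewrite coord_z eqxx eq_sym ne_1p mulr1 mulr0 add0r => <-.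
Qed.

End RspanAlgebra.

Lemma Rsubalg_trans (K : fieldType) (H : falgType K) (Rp : K -> Prop) (x y x' y' z : H) :
  Rsubalg Rp x' y' x -> Rsubalg Rp x' y' y -> Rsubalg Rp x y z -> Rsubalg Rp x' y' z.
Proof.
move=> x_in y_in; elim=> // [r Rr | a b _ a_in _ b_in | a b _ a_in _ b_in].
- exact: Rsubalg_scal.
- exact: Rsubalg_add.
- exact: Rsubalg_mul.
Qed.

Lemma Rsubalg_addZr (K : fieldType) (H : falgType K) (Rp : K -> Prop) (x y : H) r :
  Rp r -> Rsubalg Rp x y (x + r *: y).
Proof.
move=> Rr; rewrite -mulr_algl.
by apply/Rsubalg_add/Rsubalg_mul; [exact: Rsubalg_x | exact: Rsubalg_scal | exact: Rsubalg_y].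
Qed.

Section MonomialBasis.
Variables (K : fieldType) (H : falgType K).
Hypothesis Hcomm : forall x y : H, x * y = y * x.
Variable p : nat.
Hypothesis p_gt1 : (1 < p)%N.
Variables (u1 u2 : H) (c d e f : K).
Hypotheses (hu1 : u1 ^+ p = c *: u1 + d *: u2) (hu2 : u2 ^+ p = e *: u1 + f *: u2).

Local Notation Kspan := (Rspan p u1 u2 (fun=> True)).

Lemma Kspan_memv z : Kspan z <-> z \in <<monomials p u1 u2>>%VS.
Proof.
split=> [[g [_ ->]]|/coord_span ->].
  apply: memv_suml => k _; apply/memvZ/memv_span.
  by rewrite -nth_monomials mem_nth // size_tuple.
exists (coord (monomials p u1 u2) ^~ z); split=> //.
by apply: eq_bigr => k _; rewrite nth_monomials.
Qed.

Variable s : seq H.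
Hypotheses (s_sub : {subset s <= <<[:: u1; u2]>>%VS}) (s_gen : agenv <<s>>%VS = fullv)
  (dimH : \dim (fullv : {vspace H}) = (p * p)%N).

Lemma monomials_full : (fullv <= <<monomials p u1 u2>>)%VS.
Proof.
have Kspan_mulu12 (w : H) : w \in <<[:: u1; u2]>>%VS -> forall z, Kspan z -> Kspan (w * z).
  rewrite span_cons span_seq1 => /memv_addP[_ /vlineP[a ->] [_ /vlineP[b ->] ->]] z Kz.
  rewrite mulrDl -!scalerAl; apply: RspanD => //; apply: RspanZ => //.
    exact: (Rspan_mulu1 Hcomm p_gt1 I I _ _ I I I I hu1 hu2).
  exact: (Rspan_mulu2 Hcomm p_gt1 I I _ _ I I I I hu1 hu2).
have s_span : (<<s>> <= <<[:: u1; u2]>>)%VS by apply/span_subvP.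
rewrite -s_gen; apply: agenv_sub_modl.
  by rewrite -memvE; apply/Kspan_memv/Rspan1.
apply/prodvP => w z /(subvP s_span) w_u12 /Kspan_memv Kz.
exact/Kspan_memv/Kspan_mulu12.
Qed.

Lemma free_monomials : free (monomials p u1 u2).
Proof.
apply: (@basis_free _ _ fullv).
by rewrite basisEdim monomials_full size_tuple dimH leqnn.
Qed.

End MonomialBasis.

Section ChangeOfBasis.
Variables (K : fieldType) (H : falgType K) (p n : nat).
Hypothesis charK : p \in [pchar K].
Hypothesis Hcomm : forall x y : H, x * y = y * x.
Variables (t : 'I_n -> H) (B : 'M[K]_n).
Hypothesis tB : forall l, t l ^+ p = \sum_m B m l *: t m.

Lemma exprp_sum (I : finType) (F : I -> H) : (\sum_i F i) ^+ p = \sum_i F i ^+ p.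
Proof.
have charH : p \in [pchar H] by rewrite (pchar_lalg H).
apply: (big_morph (fun x : H => x ^+ p)) => [x y|]; first exact: pFrobenius_autD_comm.
by rewrite expr0n gtn_eqF // prime_gt0 // (pcharf_prime charK).
Qed.

Lemma sum_scale_combination (A : 'M[K]_n) (c : 'I_n -> K) :
  \sum_l c l *: \sum_m A m l *: t m = \sum_m (\sum_l A m l * c l) *: t m.
Proof.
under eq_bigr do rewrite scaler_sumr.
rewrite exchange_big /=; apply: eq_bigr => m _.
by rewrite scaler_suml; apply: eq_bigr => l _; rewrite scalerA mulrC.
Qed.

Lemma exprp_change_basis (Th M : 'M[K]_n) :
  Th *m M = B *m map_mx (fun x => x ^+ p) Th ->
  forall k, (\sum_l Th l k *: t l) ^+ p = \sum_l M l k *: \sum_m Th m l *: t m.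
Proof.
move=> ThM k; rewrite exprp_sum.
under eq_bigr do rewrite exprZn tB.
rewrite !sum_scale_combination; apply: eq_bigr => m _.
suff -> : \sum_l Th m l * M l k = \sum_l B m l * Th l k ^+ p by [].
have := congr1 (fun A : 'M[K]_n => A m k) ThM; rewrite !mxE => ->.
by apply: eq_bigr => l _; rewrite mxE.
Qed.

End ChangeOfBasis.

Lemma sum_ord2 (V : nmodType) (F : 'I_2 -> V) : \sum_l F l = F 0 + F 1.
Proof. by rewrite big_ord_recl big_ord1; congr (_ + F _); apply/val_inj. Qed.

Lemma Theta_mx_unit (K : fieldType) (pi : K) i j th :
  pi != 0 -> Theta_mx pi i j th \in unitmx.
Proof.
move=> pi0; rewrite unitmxE det_trig; last first.
  by apply/is_trig_mxP => -[[|[|a]] ha] -[[|[|b]] hb] //; rewrite mxE.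
by rewrite big_ord_recl big_ord1 !mxE /= unitfE mulf_neq0 ?expfz_neq0.
Qed.

Lemma exprp_Theta_gens (K : fieldType) (H : falgType K) (p : nat) (charK : p \in [pchar K])
    (Hcomm : forall x y : H, x * y = y * x) (t1 t2 : H) (B : 'M[K]_2)
    (hB1 : t1 ^+ p = B 0 0 *: t1 + B 1 0 *: t2)
    (hB2 : t2 ^+ p = B 0 1 *: t1 + B 1 1 *: t2)
    (pi : K) (i j : int) (th : K) : pi != 0 ->
  let Th := Theta_mx pi i j th in
  let M := invmx Th *m B *m map_mx (fun x => x ^+ p) Th in
  (pi ^ i *: t1 + th *: t2) ^+ p = M 0 0 *: (pi ^ i *: t1 + th *: t2) + M 1 0 *: (pi ^ j *: t2)
  /\ (pi ^ j *: t2) ^+ p = M 0 1 *: (pi ^ i *: t1 + th *: t2) + M 1 1 *: (pi ^ j *: t2).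
Proof.
move=> pi0 Th M; pose t (l : 'I_2) := [:: t1; t2]`_l.
have tB l : t l ^+ p = \sum_m B m l *: t m.
  by rewrite sum_ord2; case: l => -[|[|l]] hl //=; [rewrite hB1 | rewrite hB2];
    do 3 f_equal; apply/val_inj.
have ThM : Th *m M = B *m map_mx (fun x => x ^+ p) Th.
  by rewrite !mulmxA mulmxV ?mul1mx ?Theta_mx_unit.
have gens k : \sum_l Th l k *: t l = if k == 0 then pi ^ i *: t1 + th *: t2 else pi ^ j *: t2.
  by rewrite sum_ord2 !mxE; case: k => -[|[|k]] hk //=; rewrite scale0r add0r.
have := exprp_change_basis charK Hcomm tB ThM.
by move=> e; split; [have := e 0 | have := e 1]; rewrite gens sum_ord2 !gens.
Qed.

Lemma Theta_gens_span (K : fieldType) (H : falgType K) (pi : K) (i j : int) (th : K)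
    (t1 t2 : H) : pi != 0 ->
  (<<[:: t1; t2]>> <= <<[:: (pi ^ i *: t1 + th *: t2)%R; pi ^ j *: t2]>>)%VS.
Proof.
move=> pi0; set x := (pi ^ i *: t1 + th *: t2)%R; set y := pi ^ j *: t2.
have x_in : x \in <<[:: x; y]>>%VS by rewrite memv_span ?mem_head.
have y_in : y \in <<[:: x; y]>>%VS by rewrite memv_span // !inE eqxx orbT.
have t2_in : t2 \in <<[:: x; y]>>%VS.
  by rewrite -[t2](scalerK (expfz_neq0 j pi0)) memvZ.
have t1_in : t1 \in <<[:: x; y]>>%VS.
  rewrite -[t1](scalerK (expfz_neq0 i pi0)) memvZ //.
  by rewrite -[_ *: t1](addrK (th *: t2)) memvB ?memvZ.
by apply/span_subvP => u; rewrite !inE => /orP[] /eqP ->.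
Qed.

Lemma Rsubalg_Theta_coef (K : fieldType) (p : nat) (charK : p \in [pchar K])
    (v : K -> int) (pi : K) (hv : complete_dvr v pi)
    (H : falgType K) (Hcomm : forall x y : H, x * y = y * x)
    (Delta : H -> tensor H) (hpg : primitively_generated Delta)
    (hrank : \dim (fullv : {vspace H}) = (p ^ 2)%N) (t1 t2 : H)
    (hprim : forall t : H, primitive Delta t <-> t \in <<[:: t1; t2]>>%VS)
    (B : 'M[K]_2)
    (hB1 : t1 ^+ p = B 0 0 *: t1 + B 1 0 *: t2)
    (hB2 : t2 ^+ p = B 0 1 *: t1 + B 1 1 *: t2)
    (i j : int) (th : K) (hint : integral_cond v p B (Theta_mx pi i j th)) z a b :
  Rsubalg (inR v) (pi ^ i *: t1 + th *: t2) (pi ^ j *: t2) z ->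
  z = a *: (pi ^ i *: t1 + th *: t2) + b *: (pi ^ j *: t2) -> inR v a /\ inR v b.
Proof.
have p_gt1 : (1 < p)%N := prime_gt1 (pcharf_prime charK).
have [xp yp] := exprp_Theta_gens charK Hcomm hB1 hB2 i j th (dvr_pi_neq0 hv).
apply: (Rsubalg_coef Hcomm p_gt1 (inR0 v) (inR1 hv) (inRD hv) (inRM hv)
  (hint 0 0) (hint 1 0) (hint 0 1) (hint 1 1) xp yp).
have [s [s_prim s_gen]] := hpg.
apply: (free_monomials Hcomm p_gt1 xp yp _ s_gen); last by rewrite hrank mulnn.
by move=> t /s_prim /hprim; apply/subvP/Theta_gens_span/(dvr_pi_neq0 hv).
Qed.

Section ThetaOrders.
Variables (K : fieldType) (v : K -> int) (pi : K).
Hypothesis hv : complete_dvr v pi.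
Variables (H : falgType K) (t1 t2 : H) (i j : int) (th : K).

Local Notation x := (pi ^ i *: t1 + th *: t2).
Local Notation y := (pi ^ j *: t2).
Local Notation A := (Rsubalg (inR v) x y).

Lemma Theta_gen_shift th1 th2 :
  pi ^ i *: t1 + th2 *: t2 = pi ^ i *: t1 + th1 *: t2 + ((th2 - th1) / pi ^ j) *: y.
Proof.
by rewrite scalerA divfK ?(piz_neq0 hv) // -addrA -scalerDl subrKC.
Qed.

Lemma Theta_shift_Rsubalg th' : vge v (th - th') j ->
  forall z, A z <-> Rsubalg (inR v) (pi ^ i *: t1 + th' *: t2) y z.
Proof.
move=> /(inR_divpiz hv) r_in; have r'_in : inR v ((th' - th) / pi ^ j).
  by rewrite -opprB mulNr; apply: (inRN hv).
move=> z; split; apply: Rsubalg_trans; try exact: Rsubalg_y.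
  by rewrite (Theta_gen_shift th' th); apply: Rsubalg_addZr.
by rewrite (Theta_gen_shift th th'); apply: Rsubalg_addZr.
Qed.

Hypothesis A_coef : forall z a b, A z -> z = a *: x + b *: y -> inR v a /\ inR v b.

Lemma Theta_incl_le i' j' th' :
  A (pi ^ i' *: t1 + th' *: t2) -> A (pi ^ j' *: t2) -> i <= i' /\ j <= j'.
Proof.
move=> x'_in y'_in; split; apply: (le_of_inR_divpiz hv).
  apply: (proj1 (A_coef x'_in (b := (th' - pi ^ i' / pi ^ i * th) / pi ^ j) _)).
  by rewrite scalerDr !scalerA !divfK ?(piz_neq0 hv) // -addrA -scalerDl subrKC.
apply: (proj2 (A_coef y'_in (a := 0) _)).
by rewrite scale0r add0r scalerA divfK ?(piz_neq0 hv).
Qed.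

Lemma Theta_incl_vge th' : A (pi ^ i *: t1 + th' *: t2) -> vge v (th' - th) j.
Proof.
move=> x'_in; apply/(inR_divpiz hv).
by apply: (proj2 (A_coef x'_in (a := 1) _)); rewrite scale1r -Theta_gen_shift.
Qed.

End ThetaOrders.

Theorem proposition6p4
  (K : fieldType) (p : nat) (charK : p \in [pchar K])
  (v : K -> int) (pi : K) (hv : complete_dvr v pi)
  (H : falgType K) (Hcomm : forall x y : H, x * y = y * x)
  (Delta : H -> tensor H) (eps : H -> K) (S : H -> H)
  (hH : is_hopf Delta eps S)
  (hpg : primitively_generated Delta)
  (hrank : \dim (fullv : {vspace H}) = (p ^ 2)%N)
  (t1 t2 : H)
  (hfree : free [:: t1; t2])
  (hprim : forall t : H, primitive Delta t <-> t \in <<[:: t1; t2]>>%VS)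
  (B : 'M[K]_2)
  (hB1 : t1 ^+ p = B 0 0 *: t1 + B 1 0 *: t2)
  (hB2 : t2 ^+ p = B 0 1 *: t1 + B 1 1 *: t2)
  (i j i' j' : int) (th th' : K)
  (hth : vle v th j) (hth' : vle v th' j')
  (hint : integral_cond v p B (Theta_mx pi i j th))
  (hint' : integral_cond v p B (Theta_mx pi i' j' th')) :
  (forall z : H,
     Rsubalg (inR v) (pi ^ i *: t1 + th *: t2) (pi ^ j *: t2) z <->
     Rsubalg (inR v) (pi ^ i' *: t1 + th' *: t2) (pi ^ j' *: t2) z)
  <-> (i = i' /\ j = j' /\ vge v (th - th') j).
Proof.
have coef := Rsubalg_Theta_coef charK hv Hcomm hpg hrank hprim hB1 hB2 hint.
have coef' := Rsubalg_Theta_coef charK hv Hcomm hpg hrank hprim hB1 hB2 hint'.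
split=> [sameA | [<- [<- th_th']]]; last exact: Theta_shift_Rsubalg.
have [x_in' y_in'] := (proj1 (sameA _) (Rsubalg_x _ _ _), proj1 (sameA _) (Rsubalg_y _ _ _)).
have [x'_in y'_in] := (proj2 (sameA _) (Rsubalg_x _ _ _), proj2 (sameA _) (Rsubalg_y _ _ _)).
have [le_ii' le_jj'] := Theta_incl_le hv coef x'_in y'_in.
have [le_i'i le_j'j] := Theta_incl_le hv coef' x_in' y_in'.
have ii' : i = i' by apply/eqP; rewrite eq_le le_ii' le_i'i.
have jj' : j = j' by apply/eqP; rewrite eq_le le_jj' le_j'j.
by subst i' j'; split=> //; split=> //; exact: (Theta_incl_vge hv coef' x_in').
Qed.
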